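(* Let $X$ be a $T_1$ space and $\mathcal{P}$ an ideal of closed subsets of $X$. Then $X$ is $\tau\mathcal{P}$-compact if and only if $X$ is both $\tau\mathcal{P}$-pseudocompact and $\tau\mathcal{P}$-real compact.
   Context: An ideal of closed subsets of $X$ is a family $\mathcal{P}$ of closed subsets closed under finite unions and under passing to closed subsets. $D_f$ is the set of discontinuity points of $f\in\mathbb{R}^X$; $C(X)_\mathcal{P}=\{f\in\mathbb{R}^X\colon\overline{D_f}\in\mathcal{P}\}$ (a ring under pointwise operations), $C^*(X)_\mathcal{P}$ its bounded members. For $f\in C(X)_\mathcal{P}$, $Z_\mathcal{P}(f)=\{x\colon f(x)=0\}$, $Z_\mathcal{P}[X]$ the set of all such sets, and for $I\subseteq C(X)_\mathcal{P}$, $Z_\mathcal{P}[I]=\{Z_\mathcal{P}(f)\colon f\in I\}$. $X$ is $\tau\mathcal{P}$-compact if every subfamily of $Z_\mathcal{P}[X]$ with the finite intersection property has nonempty intersection; $\tau\mathcal{P}$-pseudocompact if $C(X)_\mathcal{P}=C^*(X)_\mathcal{P}$. A maximal ideal $M$ of $C(X)_\mathcal{P}$ is real if $C(X)_\mathcal{P}/M$ is isomorphic to $\mathbb{R}$; an ideal $I$ is fixed if $\bigcap Z_\mathcal{P}[I]\neq\emptyset$. $X$ is $\tau\mathcal{P}$-real compact if every real maximal ideal of $C(X)_\mathcal{P}$ is fixed. *)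

From HB Require Import structures.
From mathcomp Require Import all_boot all_order all_algebra.
From mathcomp Require Import all_classical all_reals all_analysis.
From mathcomp Require Import Rstruct Rstruct_topology.
From Stdlib Require Import Rdefinitions.
Set Implicit Arguments. Unset Strict Implicit. Unset Printing Implicit Defensive.
Import Order.TTheory GRing.Theory Num.Theory.
Import numFieldNormedType.Exports.
Local Open Scope classical_set_scope.
Local Open Scope ring_scope.

Notation RR := Rdefinitions.R.

Section Defs.
Variable X : topologicalType.

Definition closed_ideal (P : set (set X)) : Prop :=
  [/\ (forall A, P A -> closed A),
      P set0,
      (forall A B, P A -> P B -> P (A `|` B)) &
      (forall A B, P A -> closed B -> B `<=` A -> P B)].

Definition discont (f : X -> RR) : set X := [set x | ~ {for x, continuous f}].

Definition CP (P : set (set X)) : set (X -> RR) :=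
  [set f | P (closure (discont f))].

Definition CPstar (P : set (set X)) : set (X -> RR) :=
  [set f | CP P f /\ exists M : RR, forall x, `|f x| <= M].

Definition ZP (f : X -> RR) : set X := [set x | f x = 0].

Definition ZPX (P : set (set X)) : set (set X) := [set ZP f | f in CP P].

Definition ZPI (I : set (X -> RR)) : set (set X) := [set ZP f | f in I].

Definition fip (F : set (set X)) : Prop :=
  forall G : set (set X), finite_set G -> G `<=` F -> \bigcap_(A in G) A !=set0.

Definition tauP_compact (P : set (set X)) : Prop :=
  forall F : set (set X), F `<=` ZPX P -> fip F -> \bigcap_(A in F) A !=set0.

Definition tauP_pseudocompact (P : set (set X)) : Prop := CP P = CPstar P.

Definition ring_ideal (P : set (set X)) (I : set (X -> RR)) : Prop :=
  [/\ I `<=` CP P,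
      I (fun _ => 0),
      (forall f g, I f -> I g -> I (f \- g)) &
      (forall f g, CP P g -> I f -> I (g \* f))].

Definition maximal_ideal (P : set (set X)) (M : set (X -> RR)) : Prop :=
  [/\ ring_ideal P M, M <> CP P &
      forall J, ring_ideal P J -> M `<=` J -> J = M \/ J = CP P].

(* C(X)_P / M is isomorphic to R, written on representatives: a map phi from
   C(X)_P to R which is a unital ring morphism, onto, and whose fibres are
   exactly the cosets of M (so it induces a well-defined bijective ring
   morphism C(X)_P / M -> R). *)
Definition real_maximal_ideal (P : set (set X)) (M : set (X -> RR)) : Prop :=
  maximal_ideal P M /\
  exists phi : (X -> RR) -> RR,
    [/\ (forall f g, CP P f -> CP P g -> phi (f \+ g) = phi f + phi g),
        (forall f g, CP P f -> CP P g -> phi (f \* g) = phi f * phi g),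
        phi (fun _ => 1) = 1,
        (forall r : RR, exists2 f, CP P f & phi f = r) &
        (forall f g, CP P f -> CP P g -> (M (f \- g) <-> phi f = phi g))].

Definition fixed_ideal (I : set (X -> RR)) : Prop :=
  \bigcap_(A in ZPI I) A !=set0.

Definition tauP_realcompact (P : set (set X)) : Prop :=
  forall M, real_maximal_ideal P M -> fixed_ideal M.

End Defs.

From mathcomp Require Import all_boot all_order all_algebra.
From mathcomp Require Import all_classical all_reals all_analysis.
From mathcomp Require Import Rstruct Rstruct_topology.
Set Implicit Arguments. Unset Strict Implicit. Unset Printing Implicit Defensive.
Import Order.TTheory GRing.Theory Num.Theory.
Import numFieldNormedType.Exports.
Local Open Scope classical_set_scope.
Local Open Scope ring_scope.

(* A tauP-compact space is tauP-pseudocompact because for an unbounded f the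
   zero sets {n <= |f|} (of functions in C(X)_P) have the finite intersection
   property but an empty intersection; it is tauP-realcompact because for a
   proper ideal I, Z[I] is closed under finite intersections
   (Z(g) `&` Z(h) = Z(g^2 + h^2)) and does not contain the empty set (a
   nowhere-vanishing member would be a unit), so Z[I] meets.
   Conversely, let F be a family of zero sets with the finite intersection
   property and U an ultrafilter containing F.  Since every member of C(X)_P
   is bounded, f |-> lim_U f is a unital ring morphism from C(X)_P onto R,
   whose kernel is therefore a real maximal ideal, fixed at some x by
   tauP-realcompactness.  If Z(f) is in F then lim_U f = 0, so x lies in Z(f). *)

Lemma finite_bigcap_closed T (Q G : set (set T)) :
  Q setT -> setI_closed Q -> finite_set G -> G `<=` Q -> Q (\bigcap_(A in G) A).
Proof.
move=> QT QI /finite_fsetP [F ->] FQ; rewrite bigcap_fset.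
have : {in finmap.enum_fset F, forall A, Q A} by move=> A; apply: FQ.
elim: (finmap.enum_fset F) => [|A s IH] sQ; rewrite ?big_nil ?big_cons //.
apply: QI; first by apply: sQ; rewrite mem_head.
by apply: IH => B Bs; apply: sQ; rewrite in_cons Bs orbT.
Qed.

Lemma fip_ultra T (F : set (set T)) :
  (forall G, finite_set G -> G `<=` F -> \bigcap_(A in G) A !=set0) ->
  exists U, UltraFilter U /\ F `<=` U.
Proof.
move=> Ffip.
have UF : finI F id.
  by move=> D DF; apply: Ffip; [exact: finite_fset | move=> A /DF /set_mem].
have [U [UU sU]] := ultraFilterLemma (finI_filter UF).
by exists U; split => // A FA; apply: sU; exists A => //; exact: finI_from1.
Qed.

Lemma sqr_add_eq0 (R : realDomainType) (a b : R) :
  a * a + b * b = 0 <-> a = 0 /\ b = 0.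
Proof.
split => [/eqP|[-> ->]]; last by rewrite mulr0 addr0.
rewrite paddr_eq0 ?mulf_eq0 ?orbb -?expr2 ?sqr_ge0 //.
by case/andP => /eqP -> /eqP ->.
Qed.

Lemma ultra_bounded_cvg T (U : set_system T) (f : T -> RR) (m : RR) :
  UltraFilter U -> (forall x, `|f x| <= m) -> cvg (f @ U).
Proof.
move=> UU fm.
have [p [_ clp]] : `[- m, m] `&` cluster (f @ U) !=set0.
  apply: (@segment_compact RR); rewrite /= -/(U (f @^-1` _)).
  by apply: filterE => x; rewrite /= in_itv /= -ler_norml.
apply/cvg_ex; exists p => N Np.
have [//|UNc] := in_ultra_setVsetC (f @^-1` N) UU.
by have [y [nNy Ny]] := clp (~` N) N UNc Np.
Qed.

Section Discontinuity.
Variable X : topologicalType.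
Implicit Types f g h : X -> RR.

Lemma discont_cst (c : RR) : discont (fun _ : X => c) = set0.
Proof. by apply/seteqP; split => x // ncx; apply: ncx; exact: cvg_cst. Qed.

Lemma discont_subU f g h :
  (forall x, {for x, continuous f} -> {for x, continuous g} -> {for x, continuous h}) ->
  discont h `<=` discont f `|` discont g.
Proof.
move=> fgh x nhx; apply: contrapT => /not_orP [/contrapT fx /contrapT gx].
exact/nhx/fgh.
Qed.

Lemma discontB f g : discont (f \- g) `<=` discont f `|` discont g.
Proof. by apply: discont_subU => x; exact: (@cvgB RR RR^o). Qed.

Lemma discontM f g : discont (f \* g) `<=` discont f `|` discont g.
Proof. by apply: discont_subU => x; exact: cvgM. Qed.

Lemma discontV g : (forall x, g x != 0) -> discont (fun x => (g x)^-1) `<=` discont g.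
Proof. by move=> gN0 x nVx gx; apply: nVx; exact: cvgV (gN0 x) gx. Qed.

Lemma discont_comp (h : RR -> RR) f : continuous h -> discont (h \o f) `<=` discont f.
Proof. by move=> ch x nhx fx; apply: nhx; exact: continuous_comp fx (ch (f x)). Qed.

End Discontinuity.

Section IdealOfDiscontinuities.
Variables (X : topologicalType) (P : set (set X)).
Hypothesis HP : closed_ideal P.
Implicit Types (f g h : X -> RR) (I : set (X -> RR)).

Lemma CP_subdiscont f h : CP P f -> discont h `<=` discont f -> CP P h.
Proof.
case: HP => _ _ _ PS Pf hf; apply: (PS _ _ Pf); first exact: closed_closure.
exact: closureS.
Qed.

Lemma CP_subdiscontU f g h : CP P f -> CP P g ->
  discont h `<=` discont f `|` discont g -> CP P h.
Proof.
case: HP => _ _ PU PS Pf Pg hfg.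
apply: (PS _ _ (PU _ _ Pf Pg)); first exact: closed_closure.
by rewrite -closureU; exact: closureS.
Qed.

Lemma CP_cst (c : RR) : CP P (fun _ => c).
Proof. by rewrite /CP /= discont_cst closure0; case: HP. Qed.

Lemma CP_B f g : CP P f -> CP P g -> CP P (f \- g).
Proof. by move=> Pf Pg; apply: CP_subdiscontU Pf Pg _; exact: discontB. Qed.

Lemma CP_M f g : CP P f -> CP P g -> CP P (f \* g).
Proof. by move=> Pf Pg; apply: CP_subdiscontU Pf Pg _; exact: discontM. Qed.

Lemma CP_V g : CP P g -> (forall x, g x != 0) -> CP P (fun x => (g x)^-1).
Proof. by move=> Pg gN0; apply: CP_subdiscont Pg _; exact: discontV. Qed.

Lemma CP_comp (h : RR -> RR) f : continuous h -> CP P f -> CP P (h \o f).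
Proof. by move=> ch Pf; apply: CP_subdiscont Pf _; exact: discont_comp. Qed.

Lemma ring_idealD I f g : ring_ideal P I -> I f -> I g -> I (f \+ g).
Proof.
move=> [_ I0 IB _] If Ig.
have -> : f \+ g = f \- ((fun _ => 0) \- g) by apply/funext => x /=; rewrite sub0r opprK.
by apply: (IB) => //; exact: IB.
Qed.

Lemma ring_ideal_unit I g :
  ring_ideal P I -> I g -> (forall x, g x != 0) -> I = CP P.
Proof.
move=> [IC _ _ IM] Ig gN0.
have I1 : I (fun _ => 1).
  have -> : (fun _ => 1) = (fun x => (g x)^-1) \* g.
    by apply/funext => x /=; rewrite mulVf.
  by apply: IM (Ig); exact: CP_V (IC _ Ig) gN0.
apply/seteqP; split => // k Pk.
have -> : k = k \* (fun _ => 1) by apply/funext => x /=; rewrite mulr1.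
exact: IM.
Qed.

Lemma ZPI_bigcap I (G : set (set X)) : ring_ideal P I ->
  finite_set G -> G `<=` ZPI I -> ZPI I (\bigcap_(A in G) A).
Proof.
move=> HI; apply: finite_bigcap_closed.
  by exists (fun _ => 0); [case: HI | apply/seteqP; split].
move=> _ _ [g1 I1 <-] [g2 I2 <-]; exists (g1 \* g1 \+ g2 \* g2).
  by case: (HI) => IC _ _ IM; apply: ring_idealD => //; apply: IM => //; exact: IC.
by apply/seteqP; split => x; rewrite /ZP /= sqr_add_eq0.
Qed.

Lemma proper_ideal_fip I : ring_ideal P I -> I <> CP P -> fip (ZPI I).
Proof.
move=> HI Iproper G finG GI; have [g Ig Zg] := ZPI_bigcap HI finG GI.
apply: contrapT => /set0P/negP; rewrite negbK -Zg => /eqP Z0.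
apply/Iproper/(ring_ideal_unit HI Ig) => x; apply/eqP => gx0.
by have : ZP g x by []; rewrite Z0.
Qed.

End IdealOfDiscontinuities.

Definition level_defect (r t : RR) : RR := (`|t| - r) - `|(`|t| - r)|.

Lemma level_defect_eq0 r t : level_defect r t = 0 <-> r <= `|t|.
Proof.
rewrite /level_defect -subr_ge0 ger0_def eq_sym -subr_eq0.
by split => [->|/eqP].
Qed.

Lemma continuous_level_defect r : continuous (level_defect r).
Proof.
move=> t; have ct : (fun s : RR => `|s| - r) @ t --> `|t| - r.
  by apply: (@cvgB RR RR^o); [exact: (@cvg_norm RR RR^o) | exact: cvg_cst].
exact: (@cvgB RR RR^o) ct (@cvg_norm RR RR^o _ _ _ _ _ ct).
Qed.

Section FromCompactness.
Variables (X : topologicalType) (P : set (set X)).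
Hypotheses (HP : closed_ideal P) (Pcompact : tauP_compact P).

Lemma tauP_compact_fixed I : ring_ideal P I -> I <> CP P -> fixed_ideal I.
Proof.
move=> HI Iproper; apply: (Pcompact); first last.
  exact: (@proper_ideal_fip _ _ HP _ HI Iproper).
by move=> A [f If <-]; exists f => //; case: HI => IC _ _ _; exact: IC.
Qed.

Lemma tauP_compact_realcompact : tauP_realcompact P.
Proof. by move=> M [[HM Mproper _] _]; exact: tauP_compact_fixed. Qed.

Lemma tauP_compact_bounded f : CP P f -> exists m : RR, forall x, `|f x| <= m.
Proof.
move=> Pf; apply: contrapT => unbounded.
pose Z (n : nat) := [set x | n%:R <= `|f x|].
have ZZ n : ZPX P (Z n).
  exists (level_defect n%:R \o f).
    exact: (CP_comp HP (@continuous_level_defect n%:R) Pf).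
  by apply/seteqP; split => x; rewrite /ZP /= level_defect_eq0.
have [x Zx] : \bigcap_(A in range Z) A !=set0.
  apply: (Pcompact) => [_ [n _ <-]|G finG GZ]; first exact: ZZ.
  have [n Zn] : exists n, Z n `<=` \bigcap_(A in G) A.
    apply: (finite_bigcap_closed (Q := fun A => exists n, Z n `<=` A)) => //.
    - by exists 0%N.
    - move=> A B [n ZA] [k ZB]; exists (maxn n k) => x /= fx.
      by split; [apply: ZA | apply: ZB]; apply: le_trans fx;
        rewrite ler_nat ?leq_maxl ?leq_maxr.
    - by move=> A /GZ [n _ <-]; exists n.
  apply: contrapT => Gempty; apply: unbounded; exists n%:R => x.
  by rewrite leNgt; apply/negP => /ltW fx; apply: Gempty; exists x; exact: Zn.
by have := Zx _ (imageT _ (Num.Def.archi_bound `|f x|)); rewrite /Z /= leNgt archi_boundP.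
Qed.

Lemma tauP_compact_pseudocompact : tauP_pseudocompact P.
Proof.
apply/seteqP; split => f; last by case.
by move=> Pf; split => //; exact: tauP_compact_bounded.
Qed.

End FromCompactness.

Section CharacterKernel.
Variables (X : topologicalType) (P : set (set X)).
Hypothesis HP : closed_ideal P.
Variable phi : (X -> RR) -> RR.
Hypotheses (phiD : forall f g, CP P f -> CP P g -> phi (f \+ g) = phi f + phi g)
  (phiM : forall f g, CP P f -> CP P g -> phi (f \* g) = phi f * phi g)
  (phi_cst : forall c : RR, phi (fun _ => c) = c).

Definition CPker := [set f | CP P f /\ phi f = 0].

Lemma CP_morphB f g : CP P f -> CP P g -> phi (f \- g) = phi f - phi g.
Proof.
move=> Pf Pg; have -> : phi f = phi ((f \- g) \+ g).
  by congr phi; apply/funext => x /=; rewrite subrK.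
by rewrite (phiD (CP_B HP Pf Pg) Pg) addrK.
Qed.

Lemma CPker_ring_ideal : ring_ideal P CPker.
Proof.
split => [f []//|||f g Pg [Pf phif0]]; first by split; [exact: CP_cst | exact: phi_cst].
  move=> f g [Pf phif0] [Pg phig0].
  by split; [exact: CP_B | rewrite CP_morphB // phif0 phig0 subrr].
by split; [exact: CP_M | rewrite phiM // phif0 mulr0].
Qed.

Lemma CPker_maximal : maximal_ideal P CPker.
Proof.
split; first exact: CPker_ring_ideal.
  move=> kerE; have [_] : CPker (fun _ => 1) by rewrite kerE; exact: CP_cst.
  by rewrite phi_cst => /eqP; rewrite oner_eq0.
move=> J HJ kerJ; have [JC _ JB _] := HJ.
have [[g Jg phig]|] := pselect (exists2 g, J g & phi g != 0); last first.
  move=> /forall2NP Jker; left; apply/seteqP; split => // f Jf.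
  by split; [exact: JC | have [//|/negP/negbNE/eqP] := Jker f].
right; apply: (ring_ideal_unit HP HJ (g := fun _ => phi g)) => //.
have -> : (fun _ => phi g) = g \- (g \- fun _ => phi g).
  by apply/funext => x /=; rewrite opprB addrC subrK.
apply: JB => //; apply: kerJ; have Pg := JC _ Jg; have Pc := CP_cst HP (phi g).
by split; [exact (CP_B HP Pg Pc) | rewrite CP_morphB // phi_cst subrr].
Qed.

Lemma CPker_real_maximal : real_maximal_ideal P CPker.
Proof.
split; first exact: CPker_maximal.
exists phi; split => // [r|f g Pf Pg].
  by exists (fun _ => r); [exact: CP_cst | exact: phi_cst].
rewrite /CPker /= CP_morphB //; split => [[_ /eqP]|fg]; first by rewrite subr_eq0 => /eqP.
by split; [exact: CP_B | rewrite fg subrr].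
Qed.

End CharacterKernel.

Section FromPseudocompactness.
Variables (X : topologicalType) (P : set (set X)).
Hypotheses (HP : closed_ideal P) (Ppseudo : tauP_pseudocompact P).

Lemma CP_ultra_cvg (U : set_system X) f : UltraFilter U -> CP P f -> cvg (f @ U).
Proof. by move=> UU; rewrite Ppseudo => -[_ [m fm]]; exact: ultra_bounded_cvg fm. Qed.

Lemma ultra_lim_real_maximal (U : set_system X) :
  UltraFilter U -> real_maximal_ideal P (CPker P (fun f => lim (f @ U))).
Proof.
move=> UU; apply: CPker_real_maximal => // [f g Pf Pg|f g Pf Pg|c] /=.
- by apply: (@limD RR RR^o); exact: CP_ultra_cvg.
- by apply: limM; exact: CP_ultra_cvg.
- exact (lim_cst (@norm_hausdorff RR RR^o) c).
Qed.

Lemma tauP_pseudocompact_realcompact_compact : tauP_realcompact P -> tauP_compact P.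
Proof.
move=> Preal F FZ Ffip; have [U [UU FU]] := fip_ultra Ffip.
have [x kerx] := Preal _ (ultra_lim_real_maximal UU).
exists x => A FA; have [f Pf ZfA] := FZ A FA.
have UZf : U (ZP f) by rewrite ZfA; exact: FU.
rewrite -ZfA; apply: kerx; exists f => //; split => //=.
exact (lim_near_cst (@norm_hausdorff RR RR^o) UZf).
Qed.

End FromPseudocompactness.

Theorem theorem4p10 (X : topologicalType) (P : set (set X)) :
  accessible_space X -> closed_ideal P ->
  (tauP_compact P <-> tauP_pseudocompact P /\ tauP_realcompact P).
Proof.
move=> _ HP; split => [Pcompact|[Ppseudo Preal]].
  by split; [exact: tauP_compact_pseudocompact | exact: tauP_compact_realcompact].
exact: tauP_pseudocompact_realcompact_compact.
Qed.
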